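(* For each of the ranking measures NDCG, MAP and AUC, with binary relevance vectors and top-1 feedback, there is a number of objects $m$ for which the global observability condition fails for the corresponding game: there exist learner actions $\sigma_i,\sigma_j$ with $\ell_i-\ell_j\notin\bigoplus_{k\in[m!]}\mathrm{Col}(S_k^\top)$.
   Context: Objects are $\{1,\dots,m\}$; learner actions are the permutations $\sigma_1,\dots,\sigma_{m!}$ of $[m]$ ($\sigma(i)$ = rank of object $i$, $\sigma^{-1}(j)$ = object at rank $j$); adversary actions are $r_1,\dots,r_{2^m}$ enumerating $\{0,1\}^m$. Measures: $NDCG(\sigma,r)=\frac{1}{Z(r)}\sum_{i=1}^m\frac{r(i)}{\log_2(1+\sigma(i))}$ with $Z(r)=\max_\sigma\sum_{i}\frac{r(i)}{\log_2(1+\sigma(i))}$; $MAP(\sigma,r)=\frac{1}{\|r\|_1}\sum_{i=1}^m\frac{\sum_{j\le i}\mathbb{1}(r(\sigma^{-1}(j))=1)}{i}\mathbb{1}(r(\sigma^{-1}(i))=1)$; $AUC(\sigma,r)=\frac{1}{N(r)}\sum_{i,j}\mathbb{1}(\sigma(i)<\sigma(j))\mathbb{1}(r(i)<r(j))$ with $N(r)=\|r\|_1(m-\|r\|_1)$ (for $r$ with $Z(r)$, $\|r\|_1$ or $N(r)$ zero the measure is taken to be a constant, e.g. $1$ for the gains NDCG, MAP and $0$ for the loss AUC). For a given measure $RL$, the loss (or gain) matrix has entries $L_{i,j}=RL(\sigma_i,r_j)$ with rows $\ell_i$; the feedback matrix has $H_{i,j}=r_j(\sigma_i^{-1}(1))$;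 the signal matrix $S_i\in\{0,1\}^{2\times2^m}$ has $(S_i)_{1,\ell}=\mathbb{1}(H_{i,\ell}=0)$, $(S_i)_{2,\ell}=\mathbb{1}(H_{i,\ell}=1)$. Global observability holds if $\ell_i-\ell_j\in\bigoplus_{k\in[m!]}\mathrm{Col}(S_k^\top)$ for all pairs $i,j$. *)

From HB Require Import structures.
From mathcomp Require Import all_boot all_order all_algebra all_fingroup.
From mathcomp Require Import reals exp.
Set Implicit Arguments. Unset Strict Implicit. Unset Printing Implicit Defensive.
Import Order.TTheory GRing.Theory Num.Theory.
Local Open Scope ring_scope.

(* Objects are 'I_m (object i here = object i+1 of the paper).
   Learner actions: permutations s : {perm 'I_m}; the rank of object i is
   (s i).+1 (ranks 1..m), and the object at rank j+1 is (s^-1) j.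
   Adversary actions: binary relevance vectors r : {ffun 'I_m -> bool}. *)
Definition relv (m : nat) := {ffun 'I_m -> bool}.

Definition log2 {R : realType} (x : R) : R := ln x / ln 2.

Definition norm1 {R : realType} m (r : relv m) : R := \sum_(i < m) (r i)%:R.

Definition DCG {R : realType} m (s : {perm 'I_m}) (r : relv m) : R :=
  \sum_(i < m) (r i)%:R / log2 ((s i).+2%:R).

(* Z(r) = max_sigma DCG(sigma, r)  (all DCG values are >= 0) *)
Definition Zn {R : realType} m (r : relv m) : R :=
  \big[Num.max/0]_(t : {perm 'I_m}) DCG t r.

Definition NDCG {R : realType} m (s : {perm 'I_m}) (r : relv m) : R :=
  if Zn (R:=R) r == 0 then 1 else DCG s r / Zn (R:=R) r.

Definition MAP {R : realType} m (s : {perm 'I_m}) (r : relv m) : R :=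
  if norm1 (R:=R) r == 0 then 1 else
  (norm1 (R:=R) r)^-1 *
  \sum_(i < m) ((\sum_(j < m | (j <= i)%N) (r ((s^-1)%g j))%:R) / (i.+1)%:R
                 * (r ((s^-1)%g i))%:R).

Definition AUC {R : realType} m (s : {perm 'I_m}) (r : relv m) : R :=
  let N := norm1 (R:=R) r * (m%:R - norm1 (R:=R) r) in
  if N == 0 then 0 else
  N^-1 * \sum_(i < m) \sum_(j < m) ((s i < s j)%N && ~~ r i && r j)%:R.

Definition measure (R : realType) :=
  forall m : nat, {perm 'I_m} -> relv m -> R.

Definition loss_row {R : realType} (RL : measure R) m (s : {perm 'I_m})
  : 'rV[R]_#|relv m| :=
  \row_(j < #|relv m|) RL m s (enum_val j).

Definition feedback n (s : {perm 'I_n.+1}) (r : relv n.+1) : bool :=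
  r ((s^-1)%g ord0).

Definition signal {R : realType} n (s : {perm 'I_n.+1})
  : 'M[R]_(2, #|relv n.+1|) :=
  \matrix_(a < 2, j < #|relv n.+1|)
     (if a == 0 :> nat then ~~ feedback s (enum_val j)
      else feedback s (enum_val j))%:R.

(* Global observability: for all sigma_i, sigma_j, l_i - l_j lies in the sum
   of Col(S_k^T) = row space of S_k, over all k. *)
Definition global_observable {R : realType} (RL : measure R) n : Prop :=
  forall s t : {perm 'I_n.+1},
    (loss_row RL s - loss_row RL t <= \sum_(k : {perm 'I_n.+1}) <<signal (R:=R) k>>)%MS.

From Pilot Require Import Defs.
From HB Require Import structures.
From mathcomp Require Import all_boot all_order all_algebra all_fingroup.
From mathcomp Require Import reals exp.
From mathcomp Require Import ring lra zify.
Set Implicit Arguments. Unset Strict Implicit. Unset Printing Implicit Defensive.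
Import Order.TTheory GRing.Theory Num.Theory.
Local Open Scope ring_scope.

(* Top-1 feedback reveals a single coordinate r(k) of the relevance vector, so
   every signal row is a function of one coordinate. For objects i <> j such a
   function has zero second difference f(0) - f(e_i) - f(e_j) + f(e_i + e_j), so
   the second-difference vector annihilates the sum of all signal row spaces.
   Global observability would force the second difference of l_s - l_t to
   vanish too; swapping two adjacent ranks gives a non-zero one:
   (1 - 1/log2 3)(1 - 1/Z(e_1 + e_3)) for NDCG and 1/4 for MAP with three
   objects, and -1/12 for AUC with four. *)

Section SecondDifference.
Variables (R : realType) (n : nat) (x00 x10 x01 x11 : relv n.+1).

Definition second_diff (f : relv n.+1 -> R) : R := f x00 - f x10 - f x01 + f x11.

Definition second_diff_weight (r : relv n.+1) : R :=
  (r == x00)%:R - (r == x10)%:R - (r == x01)%:R + (r == x11)%:R.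

Definition second_diff_vec : 'cV[R]_#|relv n.+1| :=
  \col_j second_diff_weight (enum_val j).

Lemma sum_mul_indicator (f : relv n.+1 -> R) x :
  \sum_(r : relv n.+1) f r * (r == x)%:R = f x.
Proof.
rewrite (bigD1 x) //= eqxx mulr1 big1 ?addr0 // => r /negbTE ->.
by rewrite mulr0.
Qed.

Lemma mul_second_diff_vec p (M : 'M[R]_(p, #|relv n.+1|)) a
    (f : relv n.+1 -> R) :
  (forall j, M a j = f (enum_val j)) -> (M *m second_diff_vec) a 0 = second_diff f.
Proof.
move=> Mf; rewrite !mxE.
under eq_bigr do rewrite Mf !mxE.
rewrite -(big_enum_val (fun r => f r * second_diff_weight r)) /=.
rewrite /second_diff_weight; under eq_bigr do rewrite !(mulrDr, mulrN).
by rewrite !big_split !sumrN /= !sum_mul_indicator.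
Qed.

Hypothesis rectangle : forall i, (x00 i + x11 i = x10 i + x01 i)%N.

Lemma signal_sub_kermx (k : {perm 'I_n.+1}) :
  (<<signal (R:=R) k>> <= kermx second_diff_vec)%MS.
Proof.
rewrite genmxE sub_kermx; apply/eqP/matrixP => a j; rewrite (ord1 j) [RHS]mxE.
rewrite (mul_second_diff_vec (f := fun r =>
    (if a == 0 :> nat then ~~ feedback k r else feedback k r)%:R)); last first.
  by move=> j'; rewrite mxE.
rewrite /second_diff /feedback; have := rectangle ((k^-1)%g ord0).
by case: (x00 _); case: (x10 _); case: (x01 _); case: (x11 _) => //= _;
  case: ifP => _ /=; lra.
Qed.

Lemma not_global_observable (RL : measure R) (s t : {perm 'I_n.+1}) :
  second_diff (fun r => RL _ s r - RL _ t r) != 0 -> ~ global_observable RL n.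
Proof.
move=> nz_diff obs.
have sum_sub : (\sum_(k : {perm 'I_n.+1}) <<signal (R:=R) k>>
                 <= kermx second_diff_vec)%MS.
  by apply/sumsmx_subP => k _; exact: signal_sub_kermx.
move: (submx_trans (obs s t) sum_sub); rewrite sub_kermx.
move=> /eqP /matrixP /(_ 0 0).
rewrite (mul_second_diff_vec (f := fun r => RL _ s r - RL _ t r)) ?mxE.
  by move/eqP; rewrite (negbTE nz_diff).
by move=> j; rewrite !mxE.
Qed.

End SecondDifference.

Definition rel_none m : relv m := [ffun => false].
Definition rel_one m (i : 'I_m) : relv m := [ffun k => k == i].
Definition rel_two m (i j : 'I_m) : relv m := [ffun k => (k == i) || (k == j)].

Lemma rel_rectangle m (i j : 'I_m) : i != j ->
  forall k, (rel_none m k + rel_two i j k = rel_one i k + rel_one j k)%N.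
Proof.
move=> neq_ij k; rewrite !ffunE.
by case: (eqVneq k i) => [->|//]; rewrite (negbTE neq_ij).
Qed.

Definition o0 : 'I_3 := @Ordinal 3 0 isT.
Definition o1 : 'I_3 := @Ordinal 3 1 isT.
Definition o2 : 'I_3 := @Ordinal 3 2 isT.

Definition q0 : 'I_4 := @Ordinal 4 0 isT.
Definition q2 : 'I_4 := @Ordinal 4 2 isT.
Definition q3 : 'I_4 := @Ordinal 4 3 isT.

Section NDCG.
Variable R : realType.

Lemma ln2_gt0 : 0 < ln (2%:R : R).
Proof. by apply: ln_gt0; rewrite ltr1n. Qed.

Lemma log2_nat_ge1 k : 1 <= log2 (R:=R) k.+2%:R.
Proof.
rewrite /log2 ler_pdivlMr ?ln2_gt0 // mul1r.
by rewrite ler_ln ?posrE ?ltr0n // ler_nat; lia.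
Qed.

Lemma log2_2 : log2 (R:=R) 2%:R = 1.
Proof. by rewrite /log2 divff // gt_eqF ?ln2_gt0. Qed.

Lemma log2_3_gt1 : 1 < log2 (R:=R) 3%:R.
Proof.
by rewrite /log2 ltr_pdivlMr ?ln2_gt0 // mul1r ltr_ln ?posrE ?ltr0n ?ltr_nat.
Qed.

Lemma DCG_rel_none m (t : {perm 'I_m}) : DCG (R:=R) t (rel_none m) = 0.
Proof. by rewrite /DCG big1 // => i _; rewrite ffunE mul0r. Qed.

Lemma DCG_rel_one m (t : {perm 'I_m}) i :
  DCG (R:=R) t (rel_one i) = (log2 (R:=R) (t i).+2%:R)^-1.
Proof.
rewrite /DCG (bigD1 i) //= big1 ?addr0 ?ffunE ?eqxx ?div1r // => k.
by rewrite ffunE => /negbTE ->; rewrite mul0r.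
Qed.

Lemma DCG_rel_two m (t : {perm 'I_m}) i j : i != j ->
  DCG (R:=R) t (rel_two i j)
  = (log2 (R:=R) (t i).+2%:R)^-1 + (log2 (R:=R) (t j).+2%:R)^-1.
Proof.
move=> neq_ij; rewrite /DCG (bigD1 i) //= (bigD1 j) 1?eq_sym //=.
rewrite big1 ?addr0 ?ffunE ?eqxx ?orbT ?div1r // => k /andP [nki nkj].
by rewrite ffunE (negbTE nki) (negbTE nkj) mul0r.
Qed.

Lemma DCG_le_Zn m (t : {perm 'I_m}) r : DCG (R:=R) t r <= Zn (R:=R) r.
Proof. exact: (le_bigmax 0 (fun t => DCG t r)). Qed.

Lemma Zn_rel_none m : Zn (R:=R) (rel_none m) = 0.
Proof.
rewrite /Zn; elim/big_ind: _ => // [x y -> ->|t _]; first by rewrite maxxx.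
exact: DCG_rel_none.
Qed.

Lemma Zn_rel_one n (i : 'I_n.+1) : Zn (R:=R) (rel_one i) = 1.
Proof.
have inv_log2_le1 k : (log2 (R:=R) k.+2%:R)^-1 <= 1.
  by rewrite invf_le1 ?log2_nat_ge1 // (lt_le_trans ltr01 (log2_nat_ge1 _)).
apply/eqP; rewrite eq_le; apply/andP; split.
  by apply: bigmax_le => // t _; rewrite DCG_rel_one.
apply: le_trans (DCG_le_Zn (tperm i ord0) _).
by rewrite DCG_rel_one tpermL log2_2 invr1.
Qed.

Lemma Zn_rel_two_gt1 : 1 < Zn (R:=R) (rel_two o0 o2).
Proof.
apply: lt_le_trans (DCG_le_Zn 1%g _).
rewrite DCG_rel_two // !perm1 log2_2 invr1 ltrDl invr_gt0.
exact: lt_le_trans (log2_nat_ge1 2).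
Qed.

Lemma NDCG_second_diff_neq0 :
  second_diff (rel_none 3) (rel_one o0) (rel_one o2) (rel_two o0 o2)
    (fun r => NDCG (R:=R) (tperm o0 o1) r - NDCG 1%g r) != 0.
Proof.
have Z_gt1 := Zn_rel_two_gt1; set Z := Zn (rel_two o0 o2) in Z_gt1 *.
have Z_neq0 : Z != 0 by rewrite gt_eqF // (lt_trans ltr01 Z_gt1).
set a := (log2 (R:=R) 3%:R)^-1.
have a_lt1 : a < 1.
  by rewrite invf_lt1 ?log2_3_gt1 // (lt_trans ltr01 log2_3_gt1).
have -> : second_diff (rel_none 3) (rel_one o0) (rel_one o2) (rel_two o0 o2)
    (fun r => NDCG (R:=R) (tperm o0 o1) r - NDCG 1%g r) = (1 - a) * (1 - Z^-1).
  rewrite /second_diff /NDCG Zn_rel_none !Zn_rel_one eqxx oner_eq0 (negbTE Z_neq0).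
  rewrite !DCG_rel_one !DCG_rel_two // tpermL tpermD // !perm1 log2_2 invr1.
  set b := (log2 (R:=R) 4%:R)^-1.
  by rewrite /= -/Z -/a -/b; field.
apply: mulf_neq0; rewrite subr_eq0 eq_sym; first by rewrite lt_eqF.
by rewrite lt_eqF // invf_lt1 // (lt_trans ltr01 Z_gt1).
Qed.

End NDCG.

Lemma MAPE (R : realType) m (s : {perm 'I_m}) (r : relv m) :
  MAP (R:=R) s r = if Defs.norm1 (R:=R) r == 0 then 1 else
  (Defs.norm1 (R:=R) r)^-1 *
  \sum_(i < m) ((\sum_(j < m) (j <= i)%N%:R * (r ((s^-1)%g j))%:R) / i.+1%:R
                 * (r ((s^-1)%g i))%:R).
Proof.
rewrite /MAP; case: ifP => // _; congr (_ * _); apply: eq_bigr => i _.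
rewrite big_mkcond; congr (_ / _ * _); apply: eq_bigr => j _.
by case: ifP; rewrite ?mul1r ?mul0r.
Qed.

Lemma MAP_second_diff (R : realType) :
  second_diff (rel_none 3) (rel_one o0) (rel_one o2) (rel_two o0 o2)
    (fun r => MAP (R:=R) (tperm o0 o1) r - MAP 1%g r) = 4^-1.
Proof.
rewrite /second_diff !MAPE /Defs.norm1 tpermV invg1 !big_ord_recr !big_ord0 /=.
rewrite !ffunE !permE /= ?(addr0, add0r, mulr0, mul0r, mulr1, mul1r, oner_eq0).
have two_neq0 : (1 + 1 : R) != 0 by rewrite -mulr2n pnatr_eq0.
by rewrite eqxx (negbTE two_neq0); field.
Qed.

Lemma AUC_second_diff (R : realType) :
  second_diff (rel_none 4) (rel_one q0) (rel_one q2) (rel_two q0 q2)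
    (fun r => AUC (R:=R) (tperm q2 q3) r - AUC 1%g r) = - 12^-1.
Proof.
rewrite /second_diff /AUC /Defs.norm1 !big_ord_recr !big_ord0 /=.
rewrite !ffunE !permE ?perm1 /=.
rewrite !(mul0r, add0r, addr0, mulr0, mulr1, mul1r).
have N_one_neq0 : (4 - 1 : R) != 0 by apply/eqP; lra.
have N_two_neq0 : ((1 + 1) * (4 - (1 + 1)) : R) != 0 by apply/eqP; lra.
by rewrite eqxx (negbTE N_one_neq0) (negbTE N_two_neq0); field.
Qed.

Theorem lemma4 (R : realType) :
  (exists n : nat, ~ global_observable (@NDCG R) n) /\
  (exists n : nat, ~ global_observable (@MAP R) n) /\
  (exists n : nat, ~ global_observable (@AUC R) n).
Proof.
have rect3 := @rel_rectangle 3 o0 o2 isT.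
have rect4 := @rel_rectangle 4 q0 q2 isT.
split; [|split].
- exists 2; apply: (not_global_observable rect3 (s := tperm o0 o1) (t := 1%g)).
  exact: NDCG_second_diff_neq0.
- exists 2; apply: (not_global_observable rect3 (s := tperm o0 o1) (t := 1%g)).
  by rewrite MAP_second_diff invr_eq0 pnatr_eq0.
- exists 3; apply: (not_global_observable rect4 (s := tperm q2 q3) (t := 1%g)).
  by rewrite AUC_second_diff oppr_eq0 invr_eq0 pnatr_eq0.
Qed.
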